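(* Let $\mathcal M=(X,\mathcal A,\mu,\mu^{\otimes2},R,I,\Pi_R,G,E_0,\eta)$ and $\mathcal M'=(X',\mathcal A',\mu',\mu'^{\otimes2},R',I',\Pi_{R'},G',E_0',\eta)$ be admissible structural models with a common $\eta\in[0,1)$, and let $\phi:\mathcal M\to\mathcal M'$ be a morphism. Then: (i) If $(\phi\times\phi)^{-1}(G')\subseteq G$, then for every $B'\in\mathcal A'$, \[\mu'^{\otimes2}((B'\times X')\cap G')\le\mu^{\otimes2}((\phi^{-1}(B')\times X)\cap G)=\mu(\phi^{-1}(B'))+\eta\,\mu^{\otimes2}((\Pi_R^{-1}(\phi^{-1}(B'))\times X)\cap G).\] (ii) If in addition $\phi$ is surjective and $(\phi\times\phi)^{-1}(G')=G$, then for every $B'\in\mathcal A'$, \[\mu'^{\otimes2}((B'\times X')\cap G')=\mu'(B')+\eta\,\mu'^{\otimes2}((\Pi_{R'}^{-1}(B')\times X')\cap G').\]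
   Context: An admissible structural model is a tuple $(X,\mathcal A,\mu,\mu^{\otimes2},R,I,\Pi_R,G,E_0,\eta)$ with $X$ nonempty, $\mathcal A\subseteq\mathcal P(X)$ an algebra, $\mu:\mathcal A\to[0,\infty)$ finitely additive, $\mu^{\otimes2}$ finitely additive on the algebra $\mathcal A\otimes\mathcal A$ generated by rectangles with $\mu^{\otimes2}(B_1\times B_2)=\mu(B_1)\mu(B_2)$, $R,I\in\mathcal A$ disjoint, $\Pi_R:X\to R$ a map, $G\in\mathcal A\otimes\mathcal A$, $E_0>0$, $\eta\in[0,1]$, satisfying: Axiom I: $\Pi_R\circ\Pi_R=\Pi_R$, $\Pi_R|_R=\mathrm{id}_R$, $\Pi_R^{-1}(B)\in\mathcal A$ for $B\in\mathcal A$, $B\subseteq R$; Axiom II: $G$ reflexive, symmetric, $G\circ G=G$ (relational composition); Axiom III: $\mu(R)+\mu(I)=E_0$, $\mu(\Pi_R^{-1}(B))=\mu(B)$ for $B\in\mathcal A$, $B\subseteq R$, and for all $B\in\mathcal A$, $\mu^{\otimes2}((B\times X)\cap G)=\mu(B)+\eta\,\mu^{\otimes2}((\Pi_R^{-1}(B)\times X)\cap G)$. A morphism $\phi:\mathcal M\to\mathcal M'$ between admissible structural models with the same $\eta$ (the $E_0,E_0'$ may differ) is a map $\phi:X\to X'$ such that: (M1) $\phi^{-1}(B')\in\mathcal A$ for all $B'\in\mathcal A'$ and $(\phi\times\phi)^{-1}(S')\in\mathcal A\otimes\mathcal A$ for all $S'\in\mathcal A'\otimes\mathcal A'$; (M2)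 $\phi\circ\Pi_R=\Pi_{R'}\circ\phi$; (M3) $(x,y)\in G$ implies $(\phi(x),\phi(y))\in G'$; (M4) $\mu(\phi^{-1}(B'))=\mu'(B')$ for all $B'\in\mathcal A'$ and $\mu^{\otimes2}((\phi\times\phi)^{-1}(S'))=\mu'^{\otimes2}(S')$ for all $S'\in\mathcal A'\otimes\mathcal A'$. *)

From Stdlib Require Import Reals.
Open Scope R_scope.

Definition set (T : Type) := T -> Prop.

Definition set0 {T} : set T := fun _ => False.
Definition setT {T} : set T := fun _ => True.
Definition setC {T} (A : set T) : set T := fun x => ~ A x.
Definition setU {T} (A B : set T) : set T := fun x => A x \/ B x.
Definition setI {T} (A B : set T) : set T := fun x => A x /\ B x.
Definition subset {T} (A B : set T) : Prop := forall x, A x -> B x.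
Definition disjoint {T} (A B : set T) : Prop := forall x, A x -> B x -> False.
Definition preimage {T U} (f : T -> U) (B : set U) : set T := fun x => B (f x).
Definition rect {T U} (B1 : set T) (B2 : set U) : set (T * U) :=
  fun p => B1 (fst p) /\ B2 (snd p).
Definition prodmap {T U} (f : T -> U) : T * T -> U * U :=
  fun p => (f (fst p), f (snd p)).

Definition is_algebra {T} (A : set (set T)) : Prop :=
  A set0 /\ (forall B, A B -> A (setC B)) /\
  (forall B C, A B -> A C -> A (setU B C)).

Definition prod_alg {T} (A : set (set T)) : set (set (T * T)) :=
  fun S => forall C : set (set (T * T)), is_algebra C ->
    (forall B1 B2, A B1 -> A B2 -> C (rect B1 B2)) -> C S.

Definition fin_add_measure {T} (A : set (set T)) (m : set T -> R) : Prop :=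
  (forall B, A B -> 0 <= m B) /\ m set0 = 0 /\
  (forall B C, A B -> A C -> disjoint B C -> m (setU B C) = m B + m C).

Definition relcomp {T} (G H : set (T * T)) : set (T * T) :=
  fun p => exists y, G (fst p, y) /\ H (y, snd p).

Record structural_model := {
  X : Type;
  alg : set (set X);
  mu : set X -> R;
  mu2 : set (X * X) -> R;
  Rs : set X;
  Is : set X;
  PiR : X -> X;
  G : set (X * X);
  E0 : R;
  eta : R }.

Definition admissible (M : structural_model) : Prop :=
  inhabited (X M) /\
  is_algebra (alg M) /\
  fin_add_measure (alg M) (mu M) /\
  fin_add_measure (prod_alg (alg M)) (mu2 M) /\
  (forall B1 B2, alg M B1 -> alg M B2 ->
     mu2 M (rect B1 B2) = mu M B1 * mu M B2) /\
  alg M (Rs M) /\ alg M (Is M) /\ disjoint (Rs M) (Is M) /\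
  (forall x, Rs M (PiR M x)) /\
  prod_alg (alg M) (G M) /\
  0 < E0 M /\ 0 <= eta M <= 1 /\
  (* Axiom I *)
  (forall x, PiR M (PiR M x) = PiR M x) /\
  (forall x, Rs M x -> PiR M x = x) /\
  (forall B, alg M B -> subset B (Rs M) -> alg M (preimage (PiR M) B)) /\
  (* Axiom II *)
  (forall x, G M (x, x)) /\
  (forall x y, G M (x, y) -> G M (y, x)) /\
  (forall p, relcomp (G M) (G M) p <-> G M p) /\
  (* Axiom III *)
  mu M (Rs M) + mu M (Is M) = E0 M /\
  (forall B, alg M B -> subset B (Rs M) ->
     mu M (preimage (PiR M) B) = mu M B) /\
  (forall B, alg M B ->
     mu2 M (setI (rect B setT) (G M)) =
     mu M B + eta M * mu2 M (setI (rect (preimage (PiR M) B) setT) (G M))).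

Definition is_morphism (M M' : structural_model) (phi : X M -> X M') : Prop :=
  eta M = eta M' /\
  (* M1 *)
  (forall B', alg M' B' -> alg M (preimage phi B')) /\
  (forall S', prod_alg (alg M') S' -> prod_alg (alg M) (preimage (prodmap phi) S')) /\
  (* M2 *)
  (forall x, phi (PiR M x) = PiR M' (phi x)) /\
  (* M3 *)
  (forall x y, G M (x, y) -> G M' (phi x, phi y)) /\
  (* M4 *)
  (forall B', alg M' B' -> mu M (preimage phi B') = mu M' B') /\
  (forall S', prod_alg (alg M') S' ->
     mu2 M (preimage (prodmap phi) S') = mu2 M' S').

(** Both parts are transport along [phi]: by (M4) the [mu'^{⊗2}]-mass of the
    section [(B' x X') ∩ G'] equals the [mu^{⊗2}]-mass of its preimage
    [(phi^-1 B' x X) ∩ (phi x phi)^-1 G'].  If that preimage of [G'] lies in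
    [G], monotonicity of [mu^{⊗2}] gives (i), and Axiom III of [M] supplies the
    equality.  If it equals [G], the same transport applied to Axiom III of
    [M] at [phi^-1 B'], together with [Pi_R^-1 (phi^-1 B') = phi^-1 (Pi_R'^-1 B')] from
    (M2), yields Axiom III of [M'] at [B']. *)

From Stdlib Require Import Reals.
From Stdlib Require Import Classical FunctionalExtensionality PropExtensionality Lra.
Open Scope R_scope.

Lemma set_ext {T} (A B : set T) : (forall x, A x <-> B x) -> A = B.
Proof.
  intros H; apply functional_extensionality; intros x.
  apply propositional_extensionality; auto.
Qed.

Section Algebra.

Context {T : Type} {A : set (set T)}.
Hypothesis A_algebra : is_algebra A.

Lemma algebra_setT : A setT.
Proof.
  destruct A_algebra as [A0 [AC _]].
  replace (@setT T) with (setC (@set0 T)); [auto|].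
  apply set_ext; unfold setC, set0, setT; tauto.
Qed.

Lemma algebra_setI B C : A B -> A C -> A (setI B C).
Proof.
  destruct A_algebra as [_ [AC AU]]; intros AB ACc.
  replace (setI B C) with (setC (setU (setC B) (setC C))); [auto|].
  apply set_ext; intros x; unfold setC, setU, setI; split.
  - intros H; split; apply NNPP; tauto.
  - tauto.
Qed.

Lemma fin_add_measure_le {m S U} :
  fin_add_measure A m -> A S -> A U -> subset S U -> m S <= m U.
Proof.
  intros [m_ge0 [_ m_add]] AS AU SU.
  assert (AUS : A (setI U (setC S))).
  { apply algebra_setI; [|apply A_algebra]; auto. }
  replace U with (setU S (setI U (setC S))).
  - rewrite m_add; auto.
    + pose proof (m_ge0 _ AUS); lra.
    + intros x Sx [_ nSx]; auto.
  - apply set_ext; intros x; unfold setU, setI, setC; split.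
    + intros [Sx | [Ux _]]; auto.
    + intros Ux; destruct (classic (S x)); auto.
Qed.

(* [f] retracts onto [Rs], so [f^-1 B = f^-1 (B ∩ Rs)]. *)
Lemma algebra_preimage_retraction {Rs : set T} {f : T -> T} :
  A Rs -> (forall x, Rs (f x)) ->
  (forall B, A B -> subset B Rs -> A (preimage f B)) ->
  forall B, A B -> A (preimage f B).
Proof.
  intros ARs f_Rs A_pre B AB.
  replace (preimage f B) with (preimage f (setI B Rs)).
  - apply A_pre; [apply algebra_setI; auto | intros x []; auto].
  - apply set_ext; intros x; unfold preimage, setI; split; [tauto | auto].
Qed.

End Algebra.

Lemma prod_alg_is_algebra {T} (A : set (set T)) : is_algebra (prod_alg A).
Proof.
  split; [|split].
  - intros C [C0 _] _; exact C0.
  - intros S AS C HC Crect; apply HC, AS; auto.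
  - intros S U AS AU C HC Crect; apply HC; [apply AS | apply AU]; auto.
Qed.

Lemma prod_alg_rect {T} (A : set (set T)) B1 B2 :
  A B1 -> A B2 -> prod_alg A (rect B1 B2).
Proof. intros A1 A2 C _ Crect; auto. Qed.

Lemma preimage_comm {T U} {f : T -> U} {p : T -> T} {p' : U -> U} (B : set U) :
  (forall x, f (p x) = p' (f x)) ->
  preimage p (preimage f B) = preimage f (preimage p' B).
Proof. intros fp; apply set_ext; intros x; unfold preimage; rewrite fp; tauto. Qed.

Section Admissible.

Context {M : structural_model}.
Hypothesis M_adm : admissible M.

Lemma admissible_mu2 : fin_add_measure (prod_alg (alg M)) (mu2 M).
Proof. apply M_adm. Qed.

Lemma admissible_section {B} :
  alg M B -> prod_alg (alg M) (setI (rect B setT) (G M)).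
Proof.
  intros AB.
  destruct M_adm as (_ & A_alg & _ & _ & _ & _ & _ & _ & _ & AG & _).
  apply algebra_setI; [apply prod_alg_is_algebra | | exact AG].
  apply prod_alg_rect; [exact AB | apply algebra_setT, A_alg].
Qed.

Lemma admissible_preimage_PiR {B} : alg M B -> alg M (preimage (PiR M) B).
Proof.
  destruct M_adm as
    (_ & A_alg & _ & _ & _ & AR & _ & _ & PiR_R & _ & _ & _ & _ & _ & A_pre & _).
  exact (algebra_preimage_retraction A_alg AR PiR_R A_pre B).
Qed.

Lemma admissible_axiom_III {B} :
  alg M B ->
  mu2 M (setI (rect B setT) (G M)) =
    mu M B + eta M * mu2 M (setI (rect (preimage (PiR M) B) setT) (G M)).
Proof. apply M_adm. Qed.

End Admissible.

Section Morphism.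

Context {M M' : structural_model} {phi : X M -> X M'}.
Hypotheses (M_adm : admissible M) (M'_adm : admissible M')
  (phi_mor : is_morphism M M' phi).

Lemma morphism_alg_preimage {B'} : alg M' B' -> alg M (preimage phi B').
Proof. apply phi_mor. Qed.

(* The [(phi x phi)]-preimage of the section is convertible to the right-hand section. *)
Lemma morphism_mu2_section {B'} :
  alg M' B' ->
  mu2 M' (setI (rect B' setT) (G M')) =
    mu2 M (setI (rect (preimage phi B') setT) (preimage (prodmap phi) (G M'))).
Proof.
  intros AB'.
  destruct phi_mor as (_ & _ & _ & _ & _ & _ & mu2_pre).
  symmetry; exact (mu2_pre _ (admissible_section M'_adm AB')).
Qed.

Lemma morphism_mu2_section_le {B'} :
  subset (preimage (prodmap phi) (G M')) (G M) -> alg M' B' ->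
  mu2 M' (setI (rect B' setT) (G M')) <=
    mu2 M (setI (rect (preimage phi B') setT) (G M)).
Proof.
  intros G'_G AB'.
  destruct phi_mor as (_ & _ & A2_pre & _).
  rewrite morphism_mu2_section by exact AB'.
  apply (fin_add_measure_le (prod_alg_is_algebra _) (admissible_mu2 M_adm)).
  - exact (A2_pre _ (admissible_section M'_adm AB')).
  - exact (admissible_section M_adm (morphism_alg_preimage AB')).
  - intros p [Bp Gp]; split; [exact Bp | apply G'_G, Gp].
Qed.

Lemma morphism_axiom_III {B'} :
  preimage (prodmap phi) (G M') = G M -> alg M' B' ->
  mu2 M' (setI (rect B' setT) (G M')) =
    mu M' B' + eta M' * mu2 M' (setI (rect (preimage (PiR M') B') setT) (G M')).
Proof.
  intros G'_G AB'.
  destruct phi_mor as (eta_eq & _ & _ & phi_PiR & _ & mu_pre & _).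
  assert (APB' : alg M' (preimage (PiR M') B'))
    by exact (admissible_preimage_PiR M'_adm AB').
  rewrite !morphism_mu2_section, G'_G by assumption.
  rewrite admissible_axiom_III by auto using morphism_alg_preimage.
  rewrite mu_pre, eta_eq, (preimage_comm B' phi_PiR) by exact AB'.
  reflexivity.
Qed.

End Morphism.

Theorem proposition8p5 (M M' : structural_model) (phi : X M -> X M') :
  admissible M -> admissible M' -> eta M = eta M' -> eta M < 1 ->
  is_morphism M M' phi ->
  ((subset (preimage (prodmap phi) (G M')) (G M)) ->
   forall B', alg M' B' ->
     mu2 M' (setI (rect B' setT) (G M')) <=
       mu2 M (setI (rect (preimage phi B') setT) (G M)) /\
     mu2 M (setI (rect (preimage phi B') setT) (G M)) =
       mu M (preimage phi B') +
       eta M * mu2 M (setI (rect (preimage (PiR M) (preimage phi B')) setT) (G M))) /\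
  ((forall y : X M', exists x : X M, phi x = y) ->
   (forall p, preimage (prodmap phi) (G M') p <-> G M p) ->
   forall B', alg M' B' ->
     mu2 M' (setI (rect B' setT) (G M')) =
       mu M' B' + eta M' * mu2 M' (setI (rect (preimage (PiR M') B') setT) (G M'))).
Proof.
  intros M_adm M'_adm _ _ phi_mor; split.
  - intros G'_G B' AB'; split.
    + exact (morphism_mu2_section_le M_adm M'_adm phi_mor G'_G AB').
    + exact (admissible_axiom_III M_adm (morphism_alg_preimage phi_mor AB')).
  - intros _ G'_G B'.
    apply (morphism_axiom_III M_adm M'_adm phi_mor), set_ext, G'_G.
Qed.
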